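(* For every hypothesis class $\mathcal{H}\subseteq\{0,1\}^{\mathcal{X}}$, $\mathtt{CD}(\mathcal{H})<\infty$ if and only if $\mathtt{LD}(\mathcal{H})<\infty$.
   Context: A dataset of size $m$ is $S=((x_1,y_1),\dots,(x_m,y_m))\in(\mathcal{X}\times\{0,1\})^m$; it is $\mathcal{H}$-realizable if some $h\in\mathcal{H}$ satisfies $h(x_i)=y_i$ for all $i$. $G_m(\mathcal{H})$ is the graph on realizable datasets of size $m$ with $S,S'$ adjacent iff there is $x$ with $(x,0)$ appearing in $S$ and $(x,1)$ appearing in $S'$; $\omega_m$ is its clique number; $\mathtt{CD}(\mathcal{H})=\sup\{m:\omega_m=2^m\}$. A mistake tree is a complete binary tree whose internal nodes are labeled by points of $\mathcal{X}$, each internal node having one outgoing edge labeled $0$ and one labeled $1$; a root-to-leaf path yields the sequence of (node label, edge label) pairs. $\mathcal{H}$ shatters the tree if every root-to-leaf path is realizable by $\mathcal{H}$. $\mathtt{LD}(\mathcal{H})$ is the largest depth of a complete mistake tree shattered by $\mathcal{H}$ ($\infty$ if unbounded). *)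

From Stdlib Require Import List Arith.
Import ListNotations.

Section Defs.
Variable X : Type.

Definition hclass := (X -> bool) -> Prop.

Definition dataset := list (X * bool).

Definition realizable (H : hclass) (S : dataset) : Prop :=
  exists h, H h /\ forall p, In p S -> h (fst p) = snd p.

(* Adjacency in G_m(H) (undirected: symmetric closure of the stated relation). *)
Definition adjacent (S S' : dataset) : Prop :=
  exists x, (In (x, false) S /\ In (x, true) S') \/
            (In (x, true) S /\ In (x, false) S').

Definition clique (H : hclass) (m : nat) (C : list dataset) : Prop :=
  NoDup C /\
  (forall S, In S C -> length S = m /\ realizable H S) /\
  (forall S S', In S C -> In S' C -> S <> S' -> adjacent S S').

(* omega_m(H) = k : the clique number of G_m(H) equals k (some clique of size k,
   and no clique — hence no infinite clique either — is larger). *)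
Definition clique_number_eq (H : hclass) (m k : nat) : Prop :=
  (exists C, clique H m C /\ length C = k) /\
  (forall C, clique H m C -> length C <= k).

Definition CD_finite (H : hclass) : Prop :=
  exists B, forall m, clique_number_eq H m (2 ^ m) -> m <= B.

Inductive mtree : Type :=
| Leaf : mtree
| Node : X -> mtree -> mtree -> mtree.  (* Node x t0 t1: edge 0 to t0, edge 1 to t1 *)

Fixpoint complete (d : nat) (t : mtree) : Prop :=
  match d, t with
  | 0, Leaf => True
  | S d', Node _ t0 t1 => complete d' t0 /\ complete d' t1
  | _, _ => False
  end.

Fixpoint paths (t : mtree) : list (list (X * bool)) :=
  match t with
  | Leaf => [[]]
  | Node x t0 t1 =>
      map (cons (x, false)) (paths t0) ++ map (cons (x, true)) (paths t1)
  end.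

Definition shatters (H : hclass) (t : mtree) : Prop :=
  forall p, In p (paths t) -> realizable H p.

Definition LD_finite (H : hclass) : Prop :=
  exists B, forall d t, complete d t -> shatters H t -> d <= B.

End Defs.

Arguments Leaf {X}.
Arguments Node {X}.

From Stdlib Require Import List Arith Lia Classical ClassicalEpsilon.
Import ListNotations.

(* Both directions compare cliques of G_m(H) with mistake trees through the
   notion of a conflict family: a list of samples, each with a chosen
   realizer from H, that pairwise conflict (some point is labelled 0 in one
   and 1 in the other).  A clique with chosen realizers is a conflict family.

   (LD finite -> CD finite)  If H shatters no complete tree of depth d, a
   conflict family of samples of length at most m has at most phi (m * m) d
   <= (m + 1)^(2d) members, where phi n d follows the Sauer-Shelah recursion
   phi (n+1) (d+1) = phi n (d+1) + phi n d.  The bound comes from splitting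
   the family at a point x according to the realizers' label at x and
   deleting x: conflicts survive, and one side has smaller Littlestone
   dimension.  Since 2^m eventually exceeds (m + 1)^(2d), omega_m = 2^m
   forces m to be bounded.

   (CD finite -> LD finite)  The root-to-leaf paths of a shattered complete
   tree of depth d form a clique of G_d(H) of size 2^d, while Kraft's
   inequality for conflict families caps every clique of G_d(H) at 2^d; so
   omega_d = 2^d and d is bounded by the CD bound. *)

Lemma ForallOrdPairs_filter {A : Type} (R : A -> A -> Prop) (f : A -> bool) l :
  ForallOrdPairs R l -> ForallOrdPairs R (filter f l).
Proof.
  induction 1 as [|a l Ha _ IH]; simpl; [constructor|].
  destruct (f a); auto. constructor; auto.
  rewrite Forall_forall in *. intros b Hb. apply filter_In in Hb. apply Ha; tauto.
Qed.

Lemma ForallOrdPairs_map {A B : Type} (R : A -> A -> Prop) (R' : B -> B -> Prop) (f : A -> B) l :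
  (forall a b, In a l -> In b l -> R a b -> R' (f a) (f b)) ->
  ForallOrdPairs R l -> ForallOrdPairs R' (map f l).
Proof.
  intros Hf Hl. induction Hl as [|a l Ha _ IH]; simpl; constructor.
  - rewrite Forall_forall in *. intros fb Hfb. apply in_map_iff in Hfb.
    destruct Hfb as [b [<- Hb]]. apply Hf; simpl; auto.
  - apply IH. intros; apply Hf; simpl; auto.
Qed.

Lemma sum_le {A : Type} (f g : A -> nat) l :
  (forall a, In a l -> f a <= g a) -> list_sum (map f l) <= list_sum (map g l).
Proof.
  induction l as [|a l IH]; simpl; intros Hfg; [lia|].
  pose proof (Hfg a (or_introl eq_refl)).
  specialize (IH (fun b Hb => Hfg b (or_intror Hb))). lia.
Qed.

Lemma sum_lt {A : Type} (f g : A -> nat) l a0 :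
  In a0 l -> f a0 < g a0 -> (forall a, In a l -> f a <= g a) ->
  list_sum (map f l) < list_sum (map g l).
Proof.
  induction l as [|a l IH]; simpl; intros Ha0 Hlt Hfg; [destruct Ha0|].
  pose proof (sum_le f g l (fun b Hb => Hfg b (or_intror Hb))).
  pose proof (Hfg a (or_introl eq_refl)).
  destruct Ha0 as [<-|Ha0]; [lia|].
  pose proof (IH Ha0 Hlt (fun b Hb => Hfg b (or_intror Hb))). lia.
Qed.

Lemma sum_add {A : Type} (f g : A -> nat) l :
  list_sum (map (fun a => f a + g a) l) = list_sum (map f l) + list_sum (map g l).
Proof. induction l as [|a l IH]; simpl; lia. Qed.

Lemma sum_double {A : Type} (f : A -> nat) l :
  list_sum (map (fun a => 2 * f a) l) = 2 * list_sum (map f l).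
Proof.
  induction l as [|a l IH]; [reflexivity|].
  unfold list_sum in *. cbn [map fold_right]. lia.
Qed.

Lemma ForallOrdPairs_of_distinct {A B : Type} (f : A -> B) (R : A -> A -> Prop) l :
  NoDup (map f l) -> (forall a b, In a l -> In b l -> f a <> f b -> R a b) ->
  ForallOrdPairs R l.
Proof.
  induction l as [|a l IH]; intros Hnd HR; constructor.
  - apply Forall_forall. intros b Hb. apply HR; simpl; auto.
    intros E. inversion Hnd as [|? ? Hnotin _]. apply Hnotin. rewrite E. apply in_map, Hb.
  - apply IH; [inversion Hnd; auto | intros; apply HR; simpl; auto].
Qed.

(* The Sauer-Shelah recursion: phi n d bounds conflict families whose
   realizers have Littlestone dimension below d, after n splits. *)
Fixpoint phi (n d : nat) : nat :=
  match n, d with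
  | _, 0 => 0
  | 0, S _ => 1
  | S n', S d' => phi n' d + phi n' d'
  end.

Lemma phi_mono_succ n d : phi n d <= phi (S n) d.
Proof. destruct n, d; simpl; lia. Qed.

Lemma phi_mono n n' d : n <= n' -> phi n d <= phi n' d.
Proof.
  induction 1 as [|n' _ IH]; [lia|]. pose proof (phi_mono_succ n' d). lia.
Qed.

Lemma phi_le_pow n d : phi n d <= (n + 1) ^ d.
Proof.
  revert d. induction n as [|n IH]; intros [|d]; simpl phi; try (simpl; lia).
  { rewrite Nat.pow_1_l. lia. }
  pose proof (IH (S d)). pose proof (IH d).
  assert ((n + 1) ^ d <= (S n + 1) ^ d) by (apply Nat.pow_le_mono_l; lia).
  rewrite !Nat.pow_succ_r' in *. nia.
Qed.

(* Quantitative form of (1 + 1/a)^k being bounded: multiplying by (a - k)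
   absorbs the growth of (a + 1)^k against a^k. *)
Lemma ratio a k : k <= a -> (a + 1) ^ k * (a - k) <= a ^ S k.
Proof.
  induction k as [|k IH]; intros Hk; [simpl; lia|].
  specialize (IH ltac:(lia)).
  set (P := (a + 1) ^ k) in *. set (Q := a ^ S k) in *.
  change ((a + 1) ^ S k) with ((a + 1) * P). change (a ^ S (S k)) with (a * Q).
  assert (Hstep : (a + 1) * (a - S k) <= a * (a - k)) by nia.
  assert (P * ((a + 1) * (a - S k)) <= P * (a * (a - k)))
    by (apply Nat.mul_le_mono_l; exact Hstep).
  nia.
Qed.

Lemma pow_succ_le_double a k : 2 * k <= a -> (a + 1) ^ k <= 2 * a ^ k.
Proof.
  intros Hk. destruct a as [|a]; [replace k with 0 by lia; simpl; lia|].
  pose proof (ratio (S a) k ltac:(lia)) as Hr. rewrite Nat.pow_succ_r' in Hr.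
  apply (Nat.mul_le_mono_pos_r _ _ (S a)); [lia|]. nia.
Qed.

Lemma pow_shift_le a0 k j : 2 * k <= a0 -> (a0 + j) ^ k <= 2 ^ j * a0 ^ k.
Proof.
  intros Ha0. induction j as [|j IH]; [rewrite Nat.add_0_r; simpl; lia|].
  pose proof (pow_succ_le_double (a0 + j) k ltac:(lia)).
  replace (a0 + S j) with (a0 + j + 1) by lia. rewrite Nat.pow_succ_r'. lia.
Qed.

Lemma exp_beats_poly k : exists B, forall m, 2 ^ m <= (m + 1) ^ k -> m <= B.
Proof.
  set (a0 := 2 * S k). exists (2 * a0 ^ S k). intros m Hm.
  destruct (Nat.le_gt_cases a0 (m + 1)) as [Hbig|Hsmall].
  2:{ assert (1 <= a0 ^ k) by (apply Nat.le_succ_l, Nat.neq_0_lt_0, Nat.pow_nonzero; lia).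
       rewrite Nat.pow_succ_r'. nia. }
  pose proof (pow_shift_le a0 (S k) (m + 1 - a0) ltac:(lia)) as Hshift.
  replace (a0 + (m + 1 - a0)) with (m + 1) in Hshift by lia.
  assert (2 ^ (m + 1 - a0) <= 2 * 2 ^ m)
    by (rewrite <- Nat.pow_succ_r'; apply Nat.pow_le_mono_r; lia).
  assert (Hpos : 0 < 2 ^ m) by (apply Nat.neq_0_lt_0, Nat.pow_nonzero; lia).
  rewrite Nat.pow_succ_r' in Hshift.
  apply (Nat.mul_le_mono_pos_r _ _ (2 ^ m)); [exact Hpos|]. nia.
Qed.

Section Families.
Variable X : Type.

Definition dec (P : Prop) : bool :=
  if excluded_middle_informative P then true else false.

Lemma dec_true (P : Prop) : dec P = true <-> P.
Proof. unfold dec; destruct (excluded_middle_informative P); split; congruence. Qed.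

Definition consistent (h : X -> bool) (s : dataset X) : Prop :=
  forall p, In p s -> h (fst p) = snd p.

Record entry : Type := Entry { sample : dataset X; realizer : X -> bool }.

Definition conflict_family (W : list entry) : Prop :=
  ForallOrdPairs (fun a b => adjacent X (sample a) (sample b)) W /\
  (forall e, In e W -> consistent (realizer e) (sample e)).

Definition hyps (W : list entry) : hclass X := fun h => exists e, In e W /\ realizer e = h.

Definition mentions (x : X) (s : dataset X) : Prop := exists p, In p s /\ fst p = x.

Definition drop_point (x : X) (s : dataset X) : dataset X :=
  filter (fun p => negb (dec (fst p = x))) s.

Lemma in_drop_point x p s : In p (drop_point x s) <-> In p s /\ fst p <> x.
Proof.
  unfold drop_point. rewrite filter_In, Bool.negb_true_iff.
  split; intros [Hp Hx]; split; auto.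
  - intros E. rewrite <- dec_true in E. congruence.
  - destruct (dec (fst p = x)) eqn:E; auto. rewrite dec_true in E. contradiction.
Qed.

Lemma drop_point_length_le x s : length (drop_point x s) <= length s.
Proof. apply filter_length_le. Qed.

Lemma drop_point_length_lt x s : mentions x s -> length (drop_point x s) < length s.
Proof.
  intros [p [Hp <-]]. unfold drop_point. induction s as [|q s IH]; [destruct Hp|].
  simpl. destruct Hp as [->|Hp].
  - assert (dec (fst p = fst p) = true) as -> by (apply dec_true; auto).
    pose proof (filter_length_le (fun q => negb (dec (fst q = fst p))) s). simpl. lia.
  - specialize (IH Hp). destruct (negb _); simpl; lia.
Qed.

Lemma mentions_drop_point x y s : mentions y s -> y <> x -> mentions y (drop_point x s).
Proof.
  intros [p [Hp <-]] Hne. exists p. split; auto. apply in_drop_point; auto.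
Qed.

Definition select (P : entry -> Prop) (W : list entry) : list entry :=
  filter (fun e : entry => dec (P e)) W.

Lemma in_select P e W : In e (select P W) <-> In e W /\ P e.
Proof. unfold select. rewrite filter_In, dec_true. tauto. Qed.

Lemma select_cover (P Q : entry -> Prop) W :
  (forall e, In e W -> P e \/ Q e) -> length W <= length (select P W) + length (select Q W).
Proof.
  unfold select. induction W as [|e W IH]; simpl; intros HPQ; [lia|].
  specialize (IH (fun e' He' => HPQ e' (or_intror He'))).
  destruct (HPQ e (or_introl eq_refl)) as [He|He];
    [assert (dec (P e) = true) as -> by (apply dec_true; auto)
    |assert (dec (Q e) = true) as -> by (apply dec_true; auto)];
    [destruct (dec (Q e))|destruct (dec (P e))]; simpl; lia.
Qed.

Definition restrict (x : X) (P : entry -> Prop) (W : list entry) : list entry :=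
  map (fun e : entry => Entry (drop_point x (sample e)) (realizer e)) (select P W).

Lemma hyps_restrict x P W h :
  hyps (restrict x P W) h -> exists e, In e W /\ P e /\ realizer e = h.
Proof.
  intros [e' [He' <-]]. unfold restrict in He'. apply in_map_iff in He'.
  destruct He' as [e [<- He]]. apply in_select in He. exists e; simpl; tauto.
Qed.

(* Two conflicting samples stay in conflict after deleting a point on which
   their realizers agree: the conflict cannot have been at that point. *)
Lemma adjacent_drop_point x s s' h h' :
  adjacent X s s' -> consistent h s -> consistent h' s' ->
  (mentions x s -> mentions x s' -> h x = h' x) ->
  adjacent X (drop_point x s) (drop_point x s').
Proof.
  intros [y Hy] Hc Hc' Hagree. exists y.
  destruct (classic (y = x)) as [->|Hne].
  - exfalso. destruct Hy as [[A B]|[A B]];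
      specialize (Hagree (ex_intro _ _ (conj A eq_refl)) (ex_intro _ _ (conj B eq_refl)));
      apply Hc in A; apply Hc' in B; simpl in *; congruence.
  - rewrite !in_drop_point. simpl. tauto.
Qed.

Lemma restrict_conflict_family x P W :
  conflict_family W ->
  (forall a b, In a W -> In b W -> P a -> P b ->
     mentions x (sample a) -> mentions x (sample b) -> realizer a x = realizer b x) ->
  conflict_family (restrict x P W).
Proof.
  intros [Hadj Hcons] Hagree. split.
  - apply ForallOrdPairs_map with (R := fun a b => adjacent X (sample a) (sample b)).
    + intros a b Ha Hb Hab. apply in_select in Ha, Hb. simpl.
      apply adjacent_drop_point with (realizer a) (realizer b); try apply Hcons; try tauto.
      apply Hagree; tauto.
    + apply ForallOrdPairs_filter, Hadj.
  - intros e He. unfold restrict in He. apply in_map_iff in He.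
    destruct He as [a [<- Ha]]. apply in_select in Ha.
    intros p Hp. apply in_drop_point in Hp. apply (Hcons a); tauto.
Qed.

Lemma empty_conflict_family W :
  conflict_family W -> (forall e, In e W -> sample e = []) -> length W <= 1.
Proof.
  intros [Hadj _] Hempty. destruct W as [|a [|b W]]; simpl; try lia.
  inversion Hadj as [|? ? Ha _]; subst. inversion Ha as [|? ? [y Hy] _]; subst.
  rewrite (Hempty a (or_introl eq_refl)) in Hy. simpl in Hy. tauto.
Qed.

Lemma sum_restrict (f : dataset X -> nat) x P W :
  list_sum (map (fun e : entry => f (sample e)) (restrict x P W)) =
  list_sum (map (fun e : entry => if dec (P e) then f (drop_point x (sample e)) else 0) W).
Proof.
  unfold restrict, select. induction W as [|e W IH]; simpl; auto.
  destruct (dec (P e)); simpl; lia.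
Qed.

Definition total_length (W : list entry) : nat :=
  list_sum (map (fun e : entry => length (sample e)) W).

(* Kraft weight of a sample of length |s| <= L: a 2^(-|s|) share of 2^L. *)
Definition kraft_sum (L : nat) (W : list entry) : nat :=
  list_sum (map (fun e : entry => 2 ^ (L - length (sample e))) W).

Definition side (x : X) (b : bool) (e : entry) : Prop :=
  ~ mentions x (sample e) \/ realizer e x = b.

Lemma total_length_restrict x P W e0 :
  In e0 W -> mentions x (sample e0) -> total_length (restrict x P W) < total_length W.
Proof.
  intros He0 Hm. unfold total_length. rewrite sum_restrict.
  apply sum_lt with e0; auto.
  - pose proof (drop_point_length_lt _ _ Hm). cbv beta. destruct (dec (P e0)); lia.
  - intros e _. pose proof (drop_point_length_le x (sample e)).
    cbv beta. destruct (dec (P e)); lia.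
Qed.

(* Splitting at x at least preserves the total Kraft weight: an entry
   mentioning x lands on one side with doubled weight, another on both. *)
Lemma kraft_sum_split L x W :
  (forall e, In e W -> length (sample e) <= L) ->
  2 * kraft_sum L W <= kraft_sum L (restrict x (side x false) W) +
                       kraft_sum L (restrict x (side x true) W).
Proof.
  intros HL. unfold kraft_sum.
  rewrite !(sum_restrict (fun s : dataset X => 2 ^ (L - length s))), <- sum_add, <- sum_double.
  apply sum_le. intros e He. specialize (HL e He).
  pose proof (drop_point_length_le x (sample e)).
  assert (Hw : 2 ^ (L - length (sample e)) <= 2 ^ (L - length (drop_point x (sample e))))
    by (apply Nat.pow_le_mono_r; lia).
  destruct (classic (mentions x (sample e))) as [Hm|Hm].
  - pose proof (drop_point_length_lt _ _ Hm).
    assert (2 * 2 ^ (L - length (sample e)) <= 2 ^ (L - length (drop_point x (sample e))))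
      by (rewrite <- Nat.pow_succ_r'; apply Nat.pow_le_mono_r; lia).
    destruct (realizer e x) eqn:Hb;
      [assert (dec (side x true e) = true) as -> by (apply dec_true; right; auto)
      |assert (dec (side x false e) = true) as -> by (apply dec_true; right; auto)];
      lia.
  - assert (dec (side x false e) = true) as -> by (apply dec_true; left; auto).
    assert (dec (side x true e) = true) as -> by (apply dec_true; left; auto). lia.
Qed.

Lemma kraft_inequality L W :
  conflict_family W -> (forall e, In e W -> length (sample e) <= L) -> kraft_sum L W <= 2 ^ L.
Proof.
  remember (total_length W) as n eqn:Hn. revert W Hn.
  induction n as [n IH] using lt_wf_ind. intros W Hn HW HL.
  destruct (classic (exists e0 p0, In e0 W /\ In p0 (sample e0))) as [[e0 [p0 [He0 Hp0]]]|Hnone].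
  - set (x := fst p0).
    assert (Hm : mentions x (sample e0)) by (exists p0; auto).
    assert (Hside : forall b, kraft_sum L (restrict x (side x b) W) <= 2 ^ L).
    { intros b. apply (IH (total_length (restrict x (side x b) W))); auto.
      - rewrite Hn. apply total_length_restrict with e0; auto.
      - apply restrict_conflict_family; auto.
        intros a c _ _ [Ha|Ha] [Hc|Hc] Hma Hmc; congruence.
      - intros e He. unfold restrict in He. apply in_map_iff in He.
        destruct He as [a [<- Ha]]. apply in_select in Ha. simpl.
        pose proof (drop_point_length_le x (sample a)). pose proof (HL a (proj1 Ha)). lia. }
    pose proof (kraft_sum_split L x W HL). pose proof (Hside false). pose proof (Hside true). lia.
  - assert (Hempty : forall e, In e W -> sample e = []).
    { intros e He. destruct (sample e) as [|p s] eqn:E; auto.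
      exfalso. apply Hnone. exists e, p. rewrite E. simpl; auto. }
    pose proof (empty_conflict_family W HW Hempty).
    unfold kraft_sum. destruct W as [|e [|]]; simpl in *; try lia.
    rewrite (Hempty e (or_introl eq_refl)). simpl. rewrite Nat.sub_0_r. lia.
Qed.

Lemma kraft_sum_uniform L W :
  (forall e, In e W -> length (sample e) = L) -> kraft_sum L W = length W.
Proof.
  unfold kraft_sum. induction W as [|e W IH]; intros Hlen; [reflexivity|].
  cbn [map length]. unfold list_sum in *. cbn [fold_right].
  rewrite (Hlen e (or_introl eq_refl)), Nat.sub_diag, IH; [reflexivity|].
  intros e' He'. apply Hlen. simpl. auto.
Qed.

(* [no_tree K d]: K shatters no complete mistake tree of depth d, i.e.
   LD(K) < d.  In particular [no_tree K 0] says that K is empty. *)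
Definition no_tree (K : hclass X) (d : nat) : Prop :=
  forall t, complete X d t -> shatters X K t -> False.

Lemma shatters_mono (K K' : hclass X) t :
  (forall h, K h -> K' h) -> shatters X K t -> shatters X K' t.
Proof.
  intros HKK' Hs p Hp. destruct (Hs p Hp) as [h [Hh Hc]]. exists h; auto.
Qed.

Lemma no_tree_mono (K K' : hclass X) d :
  (forall h, K' h -> K h) -> no_tree K d -> no_tree K' d.
Proof. intros HK Hno t Hc Hs. exact (Hno t Hc (shatters_mono K' K t HK Hs)). Qed.

Lemma no_tree_zero (K : hclass X) h : no_tree K 0 -> ~ K h.
Proof.
  intros Hno Hh. apply (Hno Leaf); [exact I|].
  intros p [<-|[]]. exists h. split; [exact Hh | intros q []].
Qed.

Lemma shatters_node (K : hclass X) x t0 t1 :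
  shatters X (fun h => K h /\ h x = false) t0 ->
  shatters X (fun h => K h /\ h x = true) t1 ->
  shatters X K (Node x t0 t1).
Proof.
  intros Hs0 Hs1 p Hp. simpl in Hp. apply in_app_or in Hp.
  destruct Hp as [Hp|Hp]; apply in_map_iff in Hp; destruct Hp as [q [<- Hq]];
    [destruct (Hs0 q Hq) as [h [[Hh Hx] Hc]] | destruct (Hs1 q Hq) as [h [[Hh Hx] Hc]]];
    exists h; split; auto; intros r [<-|Hr]; auto.
Qed.

(* The standard-optimal-algorithm step: for any point x, one of the two
   subclasses at x has strictly smaller Littlestone dimension. *)
Lemma no_tree_split (K : hclass X) x d :
  no_tree K (S d) ->
  no_tree (fun h => K h /\ h x = false) d \/ no_tree (fun h => K h /\ h x = true) d.
Proof.
  intros Hno. apply NNPP. intros Hboth. apply not_or_and in Hboth as [H0 H1].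
  unfold no_tree in H0, H1.
  apply not_all_ex_not in H0 as [t0 H0]. apply not_all_ex_not in H1 as [t1 H1].
  apply imply_to_and in H0 as [Hc0 H0]. apply imply_to_and in H1 as [Hc1 H1].
  apply (Hno (Node x t0 t1)); [split; auto|].
  apply shatters_node; apply NNPP; auto.
Qed.

Lemma conflict_family_no_tree_zero W : no_tree (hyps W) 0 -> W = [].
Proof.
  intros Hno. destruct W as [|e W]; auto. exfalso.
  apply (no_tree_zero _ (realizer e) Hno). exists e. simpl; auto.
Qed.

Definition value (x : X) (b : bool) (e : entry) : Prop := realizer e x = b.

Lemma hyps_restrict_value x b W h :
  hyps (restrict x (value x b) W) h -> hyps W h /\ h x = b.
Proof.
  intros Hh. apply hyps_restrict in Hh as [e [He [Hb <-]]]. split; auto. exists e; auto.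
Qed.

Lemma restrict_value_conflict_family x b W :
  conflict_family W -> conflict_family (restrict x (value x b) W).
Proof.
  intros HW. apply restrict_conflict_family; auto.
  intros a c _ _ Ha Hc _ _. unfold value in *. congruence.
Qed.

(* [covered m R s]: s has length at most m, or length m + 1 and mentions a
   point of R.  Deleting the points of R one at a time therefore brings
   every covered sample down to length at most m. *)
Definition covered (m : nat) (R : list X) (s : dataset X) : Prop :=
  length s <= m \/ (length s = S m /\ exists y, In y R /\ mentions y s).

Lemma covered_drop m x R s : covered m (x :: R) s -> covered m R (drop_point x s).
Proof.
  pose proof (drop_point_length_le x s) as Hle.
  intros [Hs|[Hs [y [Hy Hm]]]]; [left; lia|].
  destruct (classic (mentions x s)) as [Hx|Hx].
  { left. pose proof (drop_point_length_lt _ _ Hx). lia. }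
  destruct Hy as [<-|Hy]; [contradiction|].
  destruct (Nat.le_gt_cases (length (drop_point x s)) m) as [Hd|Hd]; [left; exact Hd|].
  right. split; [lia|]. exists y. split; auto.
  apply mentions_drop_point; auto. intros ->. contradiction.
Qed.

Section Covering.
Variables m n : nat.

Hypothesis bound_short : forall d W, conflict_family W -> no_tree (hyps W) d ->
  (forall e, In e W -> length (sample e) <= m) -> length W <= phi n d.

(* Splitting successively at the points of R: each split at x divides the
   family according to the realizers' value at x; one side loses a level of
   Littlestone dimension, which yields the recursion defining phi. *)
Lemma split_on_points R : forall d W, conflict_family W -> no_tree (hyps W) d ->
  (forall e, In e W -> covered m R (sample e)) -> length W <= phi (n + length R) d.
Proof.
  induction R as [|x R IH]; intros d W HW Hno Hcov.
  - rewrite Nat.add_0_r. apply bound_short; auto.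
    intros e He. destruct (Hcov e He) as [Hs|[_ [y [[] _]]]]. exact Hs.
  - destruct d as [|d].
    { rewrite (conflict_family_no_tree_zero W Hno). simpl. lia. }
    assert (Hsplit : length W <= length (restrict x (value x false) W) +
                                 length (restrict x (value x true) W)).
    { unfold restrict. rewrite !length_map. apply select_cover.
      intros e _. unfold value. destruct (realizer e x); auto. }
    assert (Hside : forall b d', no_tree (fun h => hyps W h /\ h x = b) d' ->
              length (restrict x (value x b) W) <= phi (n + length R) d').
    { intros b d' Hno'. apply IH.
      - apply restrict_value_conflict_family, HW.
      - apply no_tree_mono with (fun h => hyps W h /\ h x = b); auto.
        intros h. apply hyps_restrict_value.
      - intros e' He'. unfold restrict in He'. apply in_map_iff in He' as [e [<- He]].
        apply in_select in He. apply covered_drop, Hcov. tauto. }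
    assert (Hwide : forall b, no_tree (fun h => hyps W h /\ h x = b) (S d))
      by (intros b; apply no_tree_mono with (hyps W); [tauto | exact Hno]).
    simpl length. rewrite Nat.add_succ_r. simpl phi.
    destruct (no_tree_split (hyps W) x d Hno) as [Hlow|Hlow].
    + pose proof (Hside false d Hlow). pose proof (Hside true (S d) (Hwide true)). lia.
    + pose proof (Hside true d Hlow). pose proof (Hside false (S d) (Hwide false)). lia.
Qed.

End Covering.

(* Every other sample
   conflicts with the first one at one of its points, so splitting at those
   (at most m + 1) points shortens all samples of maximal length. *)
Lemma conflict_family_bound m : forall d W, conflict_family W -> no_tree (hyps W) d ->
  (forall e, In e W -> length (sample e) <= m) -> length W <= phi (m * m) d.
Proof.
  induction m as [|m IH]; intros d W HW Hno Hlen.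
  - destruct d as [|d].
    { rewrite (conflict_family_no_tree_zero W Hno). simpl. lia. }
    simpl. apply empty_conflict_family; auto. intros e He.
    specialize (Hlen e He). destruct (sample e); simpl in *; [auto | lia].
  - destruct W as [|e0 W']; [simpl; lia|].
    apply Nat.le_trans with (phi (m * m + length (map fst (sample e0))) d).
    + apply split_on_points with m; auto.
      intros e He. destruct (Nat.le_gt_cases (length (sample e)) m) as [Hs|Hl];
        [left; exact Hs | right].
      split; [specialize (Hlen e He); lia|].
      destruct He as [<-|He].
      * destruct (sample e0) as [|p s]; [simpl in Hl; lia|].
        exists (fst p). split; [simpl; auto | exists p; simpl; auto].
      * destruct HW as [Hadj _]. inversion Hadj as [|? ? Hfirst _]; subst.
        rewrite Forall_forall in Hfirst. destruct (Hfirst e He) as [y [[A B]|[A B]]].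
        -- exists y. split; [apply in_map_iff; exists (y, false); auto | exists (y, true); auto].
        -- exists y. split; [apply in_map_iff; exists (y, true); auto | exists (y, false); auto].
    + apply phi_mono. rewrite length_map. specialize (Hlen e0 (or_introl eq_refl)). nia.
Qed.

Lemma choose_realizers (H : hclass X) (C : list (dataset X)) :
  (forall s, In s C -> realizable X H s) ->
  exists W, map sample W = C /\
    forall e, In e W -> H (realizer e) /\ consistent (realizer e) (sample e).
Proof.
  induction C as [|s C IH]; intros HC.
  - exists []. simpl. tauto.
  - destruct IH as [W [HWC HW]]; [intros; apply HC; simpl; auto|].
    destruct (HC s (or_introl eq_refl)) as [h [Hh Hc]].
    exists (Entry s h :: W). simpl. rewrite HWC. split; auto.
    intros e [<-|He]; auto.
Qed.

Lemma clique_conflict_family (H : hclass X) m C : clique X H m C ->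
  exists W, map sample W = C /\ conflict_family W /\
    (forall h, hyps W h -> H h) /\ (forall e, In e W -> length (sample e) = m).
Proof.
  intros [Hnd [Hreal Hadj]].
  destruct (choose_realizers H C) as [W [<- HW]]; [intros s Hs; apply Hreal, Hs|].
  exists W. split; [reflexivity|]. split; [split|split].
  - apply ForallOrdPairs_of_distinct with sample; auto.
    intros a b Ha Hb Hab. apply Hadj; auto; apply in_map; auto.
  - intros e He. apply HW, He.
  - intros h [e [He <-]]. apply HW, He.
  - intros e He. apply Hreal, in_map, He.
Qed.

(* Cliques of G_m(H) have at most 2^m vertices (Kraft with equal lengths). *)
Lemma clique_size_pow (H : hclass X) m C : clique X H m C -> length C <= 2 ^ m.
Proof.
  intros HC. destruct (clique_conflict_family H m C HC) as [W [<- [HW [_ Hlen]]]].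
  rewrite length_map.
  rewrite <- (kraft_sum_uniform m W Hlen).
  apply kraft_inequality; auto. intros e He. rewrite Hlen; auto.
Qed.

Lemma clique_size_poly (H : hclass X) d m C :
  no_tree H d -> clique X H m C -> length C <= (m + 1) ^ (2 * d).
Proof.
  intros Hno HC. destruct (clique_conflict_family H m C HC) as [W [<- [HW [Hhyps Hlen]]]].
  rewrite length_map.
  pose proof (conflict_family_bound m d W HW (no_tree_mono H _ d Hhyps Hno)
                (fun e He => Nat.eq_le_incl _ _ (Hlen e He))).
  pose proof (phi_le_pow (m * m) d).
  assert ((m * m + 1) ^ d <= (m + 1) ^ (2 * d))
    by (rewrite Nat.pow_mul_r; apply Nat.pow_le_mono_l; rewrite Nat.pow_2_r; nia).
  lia.
Qed.

Lemma adjacent_cons (p : X * bool) s s' : adjacent X s s' -> adjacent X (p :: s) (p :: s').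
Proof. intros [y [[A B]|[A B]]]; exists y; [left|right]; simpl; auto. Qed.

Lemma paths_nodup (t : mtree X) : NoDup (paths X t).
Proof.
  induction t as [|x t0 IH0 t1 IH1]; simpl; [repeat constructor; simpl; tauto|].
  apply NoDup_app.
  - apply NoDup_map_NoDup_ForallPairs; auto. intros a b _ _ E. injection E; auto.
  - apply NoDup_map_NoDup_ForallPairs; auto. intros a b _ _ E. injection E; auto.
  - intros p Hp Hp'. apply in_map_iff in Hp as [a [<- _]].
    apply in_map_iff in Hp' as [b [E _]]. discriminate.
Qed.

(* Distinct root-to-leaf paths conflict at the node where they separate. *)
Lemma paths_adjacent (t : mtree X) p q :
  In p (paths X t) -> In q (paths X t) -> p <> q -> adjacent X p q.
Proof.
  revert p q. induction t as [|x t0 IH0 t1 IH1]; simpl; intros p q Hp Hq Hpq.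
  - destruct Hp as [<-|[]]. destruct Hq as [<-|[]]. contradiction.
  - apply in_app_or in Hp, Hq.
    destruct Hp as [Hp|Hp]; apply in_map_iff in Hp as [p' [<- Hp]];
    destruct Hq as [Hq|Hq]; apply in_map_iff in Hq as [q' [<- Hq]].
    + apply adjacent_cons, IH0; auto. congruence.
    + exists x. left. simpl. auto.
    + exists x. right. simpl. auto.
    + apply adjacent_cons, IH1; auto. congruence.
Qed.

Lemma paths_complete d (t : mtree X) : complete X d t ->
  length (paths X t) = 2 ^ d /\ forall p, In p (paths X t) -> length p = d.
Proof.
  revert t. induction d as [|d IH]; intros [|x t0 t1] Hc; simpl in Hc; try contradiction.
  - split; [reflexivity|]. intros p [<-|[]]. reflexivity.
  - destruct Hc as [Hc0 Hc1]. destruct (IH t0 Hc0) as [L0 P0]. destruct (IH t1 Hc1) as [L1 P1].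
    simpl. rewrite length_app, !length_map, L0, L1. split; [simpl; lia|].
    intros p Hp. apply in_app_or in Hp.
    destruct Hp as [Hp|Hp]; apply in_map_iff in Hp as [p' [<- Hp]]; simpl; f_equal; auto.
Qed.

Lemma tree_paths_clique (H : hclass X) d t :
  complete X d t -> shatters X H t -> clique X H d (paths X t) /\ length (paths X t) = 2 ^ d.
Proof.
  intros Hc Hs. destruct (paths_complete d t Hc) as [Hlen Hsize].
  split; [|exact Hlen]. split; [apply paths_nodup|]. split.
  - intros p Hp. split; [apply Hsize | apply Hs]; exact Hp.
  - apply paths_adjacent.
Qed.

End Families.

Theorem mainTheorem12 (X : Type) (H : (X -> bool) -> Prop) :
  CD_finite X H <-> LD_finite X H.
Proof.
  split.
  - intros [B HB]. exists B. intros d t Hc Hs. apply HB.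
    destruct (tree_paths_clique X H d t Hc Hs) as [Hclique Hlen]. split.
    + exists (paths X t). auto.
    + intros C HC. exact (clique_size_pow X H d C HC).
  - intros [B0 HB0]. destruct (exp_beats_poly (2 * S B0)) as [B HB].
    exists B. intros m [[C [HC Hlen]] _]. apply HB. rewrite <- Hlen.
    apply (clique_size_poly X H (S B0) m C); auto.
    intros t Hc Hs. specialize (HB0 _ t Hc Hs). lia.
Qed.
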